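(* Consider a planar vehicle satisfying the Property below, with abstract trajectory $\mathcal{T}$ and measurement points $\mathcal{P}_0,\dots,\mathcal{P}_{N_m-1}$, and let $\rho_k=\|\mathcal{P}_k-B\|$, $k=0,\dots,N_m-1$, be range measurements all collected from a single anchor $B$. A roto-translated copy $\bar{\mathcal{T}}$ of $\mathcal{T}$ is $u$-indistinguishable from $\mathcal{T}$ (i.e. produces the same measurements) if: (1) for any $N_m$, $\bar{\mathcal{T}}$ is a rotation of $\mathcal{T}$ about the anchor $B$; (2) for $N_m=1$ (or $N_m>1$ with all points $\mathcal{P}_k$ coincident), $\bar{\mathcal{T}}$ is a rotation of $\mathcal{T}$ about the unique measurement point $\mathcal{P}_0$; (3) for $N_m=2$ (or $N_m>2$ with all points $\mathcal{P}_k$ collinear), $\bar{\mathcal{T}}$ is symmetric to $\mathcal{T}$ with respect to an axis passing through the anchor $B$.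
   Context: A vehicle moves in the plane with dynamics $\dot q=f(q,u)$ and known input; its position in a vehicle frame $\mathcal{V}$ (centred at its initial position) is $P_V(t)$, computable from the inputs. Property: there is a unique triple $(\Delta x,\Delta y,\phi)$ with $P(t)=R_\phi P_V(t)+[\Delta x,\Delta y]^\top$, $R_\phi$ the rotation matrix by angle $\phi$, mapping the vehicle frame to the world frame. Measurements are taken at known instants $t_k$; the measurement points are $\mathcal{P}_k=R_\phi P_V(t_k)+[\Delta x,\Delta y]^\top$, and the abstract trajectory $\mathcal{T}$ is the union of segments joining consecutive $\mathcal{P}_k$, viewed as a rigid body. A trajectory $\bar{\mathcal{T}}$ is ($u$-)indistinguishable from $\mathcal{T}$ if it is generated by the same known input from a different final condition (equivalently, is another rigid placement of the same point sequence) and yields the identical sequence of range measurements. *)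

From Stdlib Require Import Reals.
Open Scope R_scope.

Definition pt := (R * R)%type.

Definition padd (p q : pt) : pt := (fst p + fst q, snd p + snd q).
Definition psub (p q : pt) : pt := (fst p - fst q, snd p - snd q).

Definition pnorm (p : pt) : R := sqrt (fst p ^ 2 + snd p ^ 2).

Definition rot (phi : R) (p : pt) : pt :=
  (cos phi * fst p - sin phi * snd p, sin phi * fst p + cos phi * snd p).

(* reflection of a vector across the line through the origin with direction angle a *)
Definition refl (a : R) (p : pt) : pt :=
  (cos (2 * a) * fst p + sin (2 * a) * snd p,
   sin (2 * a) * fst p - cos (2 * a) * snd p).

(* Measurement points of the rigid placement (phi, dx, dy) of the
   vehicle-frame positions V k = P_V(t_k):  R_phi V k + [dx, dy]^T *)
Definition placement (V : nat -> pt) (phi dx dy : R) (k : nat) : pt :=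
  padd (rot phi (V k)) (dx, dy).

Definition range (B : pt) (P : nat -> pt) (k : nat) : R := pnorm (psub (P k) B).

(* Pbar is u-indistinguishable from P (N measurement instants): Pbar is another
   rigid placement of the same vehicle-frame point sequence V and yields the
   identical sequence of range measurements from the anchor B. *)
Definition u_indistinguishable (N : nat) (V : nat -> pt) (B : pt)
    (P Pbar : nat -> pt) : Prop :=
  (exists phi' dx' dy', forall k, (k < N)%nat -> Pbar k = placement V phi' dx' dy' k) /\
  (forall k, (k < N)%nat -> range B Pbar k = range B P k).

Definition all_coincident (N : nat) (P : nat -> pt) : Prop :=
  forall k, (k < N)%nat -> P k = P 0%nat.

Definition all_collinear (N : nat) (P : nat -> pt) : Prop :=
  exists (a v : pt), v <> (0, 0) /\
    forall k, (k < N)%nat -> exists t : R, P k = padd a (t * fst v, t * snd v).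

(* Both a rotation about the anchor B and a reflection across an axis through B
   are isometries fixing B, so they preserve every range to B; and when all measurement points
   coincide, a rotation about that point fixes each of them. *)

From Stdlib Require Import Reals Lia.
Open Scope R_scope.

Definition conj_x (p : pt) : pt := (fst p, - snd p).

Lemma sum_sq_rotation c s x y :
  c ^ 2 + s ^ 2 = 1 -> (c * x - s * y) ^ 2 + (s * x + c * y) ^ 2 = x ^ 2 + y ^ 2.
Proof.
  intros Hcs.
  transitivity ((c ^ 2 + s ^ 2) * (x ^ 2 + y ^ 2)); [ring |].
  rewrite Hcs; ring.
Qed.

Lemma cos_sin_sq th : cos th ^ 2 + sin th ^ 2 = 1.
Proof. rewrite Rplus_comm, <- (sin2_cos2 th); unfold Rsqr; ring. Qed.

Lemma pnorm_rot th p : pnorm (rot th p) = pnorm p.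
Proof.
  unfold pnorm, rot; cbn [fst snd].
  now rewrite (sum_sq_rotation _ _ _ _ (cos_sin_sq th)).
Qed.

Lemma pnorm_conj_x p : pnorm (conj_x p) = pnorm p.
Proof. unfold pnorm, conj_x; simpl; f_equal; ring. Qed.

Lemma refl_rot_conj_x a p : refl a p = rot (2 * a) (conj_x p).
Proof. unfold refl, rot, conj_x; simpl; f_equal; ring. Qed.

Lemma pnorm_refl a p : pnorm (refl a p) = pnorm p.
Proof. now rewrite refl_rot_conj_x, pnorm_rot, pnorm_conj_x. Qed.

Lemma psub_padd_l c p : psub (padd c p) c = p.
Proof. destruct c, p; unfold psub, padd; simpl; f_equal; ring. Qed.

Lemma padd_rot_psub_diag c th : padd c (rot th (psub c c)) = c.
Proof. destruct c; unfold padd, rot, psub; simpl; f_equal; ring. Qed.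

Lemma range_rot_about_anchor B th p :
  pnorm (psub (padd B (rot th (psub p B))) B) = pnorm (psub p B).
Proof. now rewrite psub_padd_l, pnorm_rot. Qed.

Lemma range_refl_about_anchor B a p :
  pnorm (psub (padd B (refl a (psub p B))) B) = pnorm (psub p B).
Proof. now rewrite psub_padd_l, pnorm_refl. Qed.

Lemma all_coincident_1 P : all_coincident 1 P.
Proof. intros k Hk; now replace k with 0%nat by lia. Qed.

Theorem theorem1 (N : nat) (V : nat -> pt) (phi dx dy : R) (B : pt)
    (phi' dx' dy' : R) :
  (1 <= N)%nat ->
  let P := placement V phi dx dy in
  let Pbar := placement V phi' dx' dy' in
  ( (* (1) rotation of T about the anchor B *)
    (exists th : R, forall k, (k < N)%nat -> Pbar k = padd B (rot th (psub (P k) B)))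
    \/
    (* (2) N = 1 or all points coincident; rotation about P_0 *)
    ((N = 1%nat \/ all_coincident N P) /\
     exists th : R, forall k, (k < N)%nat -> Pbar k = padd (P 0%nat) (rot th (psub (P k) (P 0%nat))))
    \/
    (* (3) N = 2 or all points collinear; reflection across an axis through B *)
    ((N = 2%nat \/ all_collinear N P) /\
     exists a : R, forall k, (k < N)%nat -> Pbar k = padd B (refl a (psub (P k) B))) ) ->
  u_indistinguishable N V B P Pbar.
Proof.
  intros _ P Pbar Hcases. split.
  { now exists phi', dx', dy'. }
  intros k Hk; unfold range.
  destruct Hcases as [[th Hrot] | [[Hcoinc [th Hrot]] | [_ [a Hrefl]]]].
  - rewrite (Hrot k Hk). apply range_rot_about_anchor.
  - assert (Hall : all_coincident N P)
      by (destruct Hcoinc as [-> | Hall]; [apply all_coincident_1 | exact Hall]).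
    now rewrite (Hrot k Hk), (Hall k Hk), padd_rot_psub_diag.
  - rewrite (Hrefl k Hk). apply range_refl_about_anchor.
Qed.
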